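(* Let $m\ge 1$ and $n\geq 3m+1$ be integers, and let $p,q$ be real numbers with $0<p\leq q$ and $0<p+q<1$. Then the minimum discrepancy of $C_{n,m}$ equals $$\delta(C_{n,m})=\min\{m^2,\ (1+\gamma)m\},$$ where $\gamma=\gamma_{p,q}=\log_{\frac{q}{1-p}}\left(\frac{p}{1-q}\right)$.
   Context: For integers $n\geq 2$, $N=\binom{n}{2}$ and $1\leq m\leq n$, the community code $C_{n,m}\subseteq\mathbb{F}_2^N$ consists of exactly those binary vectors of length $N$ that are the upper-triangular (off-diagonal) part of the adjacency matrix of a simple undirected graph on the labeled vertex set $\{1,\ldots,n\}$ which is a disjoint union of cliques, each clique having at least $m$ vertices. For $\mathbf{x},\mathbf{y}\in\mathbb{F}_2^N$ and $a,b\in\mathbb{F}_2$ let $d_{ab}(\mathbf{y},\mathbf{x})=|\{i: y_i=a,\ x_i=b\}|$. The discrepancy is $\delta(\mathbf{y},\mathbf{x})=\gamma\, d_{10}(\mathbf{y},\mathbf{x})+d_{01}(\mathbf{y},\mathbf{x})$ with $\gamma=\log_{\frac{q}{1-p}}\left(\frac{p}{1-q}\right)$. The minimum discrepancy $\delta(C)$ of a code $C$ is the minimum of $\delta(\mathbf{y},\mathbf{x})$ over all ordered pairs of distinct codewords $\mathbf{x},\mathbf{y}\in C$. *)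

From HB Require Import structures.
From mathcomp Require Import all_boot all_order all_algebra.
From mathcomp Require Import reals exp.
Set Implicit Arguments. Unset Strict Implicit. Unset Printing Implicit Defensive.
Import Order.TTheory GRing.Theory Num.Theory.
Local Open Scope ring_scope.

(* Coordinates of F_2^N, N = binom(n,2): the off-diagonal upper-triangular
   positions (i,j), i < j, of an n x n adjacency matrix. *)
Definition pos (n : nat) := {ij : 'I_n * 'I_n | (ij.1 < ij.2)%N}.

Definition word (n : nat) := {ffun pos n -> bool}.

(* x is the upper-triangular part of the adjacency matrix of a graph on
   {1..n} which is a disjoint union of cliques, each with >= m vertices:
   the cliques form a partition P of the vertex set, and i~j iff i and j
   lie in the same block. *)
Definition community_code (n m : nat) (x : word n) : Prop :=
  exists P : {set {set 'I_n}},
    [/\ partition P [set: 'I_n],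
        (forall B, B \in P -> (m <= #|B|)%N) &
        (forall ij : pos n,
            x ij = (pblock P (val ij).1 == pblock P (val ij).2))].

Arguments community_code : clear implicits.

Definition dab (n : nat) (y x : word n) (a b : bool) : nat :=
  #|[set i : pos n | (y i == a) && (x i == b)]|.

Section Reals.
Variable R : realType.

Definition gamma (p q : R) : R := ln (p / (1 - q)) / ln (q / (1 - p)).

Definition discrepancy (p q : R) (n : nat) (y x : word n) : R :=
  gamma p q * (dab y x true false)%:R + (dab y x false true)%:R.

Definition is_min_discrepancy (p q : R) (n : nat) (C : word n -> Prop) (v : R)
  : Prop :=
  (exists x y, [/\ C x, C y, x != y & discrepancy p q y x = v]) /\
  (forall x y, C x -> C y -> x != y -> v <= discrepancy p q y x).
End Reals.

From HB Require Import structures.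
From mathcomp Require Import all_boot all_order all_algebra.
From mathcomp Require Import reals exp.
From mathcomp Require Import zify lra.

(* Describe a codeword by a labelling of the vertices whose fibres are the
   cliques.  For labellings f (of x) and g (of y), 2 d01(y, x) counts the ordered
   pairs joined by f and separated by g, and 2 d10(y, x) those joined by g and
   separated by f.  The key estimate is that d10 < m forces d01 >= m^2: a g-block
   split by f contributes at least 2 (m - 1) to 2 d10 < 2 m, so either g refines
   f, or some g-block Q is split, has exactly m vertices and is the only split
   block.  Then two g-blocks inside one f-block, resp. Q together with the at
   least m vertices outside Q in the f-block of each vertex of Q, give m^2
   separated pairs across a cut, each counted from both sides.  Hence
   delta >= m^2 unless d10, d01 >= m, in which case delta >= (1 + gamma) m as
   gamma >= 1.  Splitting a block of size 2 m into halves, and moving a vertex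
   from a block of size m + 1 to one of size m, attain both values. *)

Set Implicit Arguments.
Unset Strict Implicit.
Unset Printing Implicit Defensive.

Lemma leq_sum_disjoint (T : finType) (A B : {set T}) (F : T -> nat) :
  [disjoint A & B] -> \sum_(t in A) F t + \sum_(t in B) F t <= \sum_t F t.
Proof. by move=> AB; rewrite -bigU // [X in _ <= X](bigID [predU A & B]) leq_addr. Qed.

Lemma sum_card_cross (T : finType) (R : T -> {set T}) (A : {set T}) :
    (forall s t, (t \in R s) = (s \in R t)) ->
  \sum_(s in A) #|R s :\: A| = \sum_(t in ~: A) #|R t :&: A|.
Proof.
move=> R_sym.
have cardIE (B C : {set T}) : #|B :&: C| = \sum_(t in C) (t \in B).
  rewrite -sum1_card big_mkcond [RHS]big_mkcond; apply: eq_bigr => t _.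
  by rewrite inE; case: (t \in B); case: (t \in C).
under eq_bigr do rewrite setDE cardIE.
rewrite exchange_big /=; apply: eq_bigr => t _.
by rewrite cardIE; apply: eq_bigr => s _; rewrite R_sym.
Qed.

Lemma card_cut (T : finType) (R : T -> {set T}) (A : {set T}) :
    (forall s t, (t \in R s) = (s \in R t)) ->
  2 * \sum_(s in A) #|R s :\: A| <= \sum_s #|R s|.
Proof.
move=> R_sym; rewrite mul2n -addnn {2}(sum_card_cross A R_sym).
rewrite [X in _ <= X](bigID (mem A)) /=; apply: leq_add.
  by apply: leq_sum => s _; apply/subset_leq_card/subsetDl.
rewrite big_mkcond [X in _ <= X]big_mkcond /=; apply: leq_sum => t _.
by rewrite inE; case: (t \in A) => //=; apply/subset_leq_card/subsetIl.
Qed.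

Section Blocks.
Variables (T : finType) (L : eqType).
Implicit Types (f g : T -> L) (s t u : T).

Definition block f s : {set T} := [set t | f t == f s].

Lemma mem_block f s : s \in block f s.
Proof. by rewrite inE. Qed.

Lemma block_eq f s t : f s = f t -> block f s = block f t.
Proof. by move=> e; apply/setP => u; rewrite !inE e. Qed.

Lemma eq_block f s t : (block f s == block f t) = (f s == f t).
Proof.
apply/eqP/eqP => [/setP/(_ s)|/block_eq //].
by rewrite !inE eqxx => /esym/eqP.
Qed.

Definition nsplit f g := \sum_s #|block f s :\: block g s|.

Lemma split_sym f g s t :
  (t \in block f s :\: block g s) = (s \in block f t :\: block g t).
Proof. by rewrite !inE [f s == _]eq_sym [g s == _]eq_sym. Qed.

Lemma nsplit_refined f g : (forall s t, f s = f t -> g s = g t) -> nsplit f g = 0.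
Proof.
move=> refined; apply: big1 => s _; apply/eqP; rewrite cards_eq0; apply/eqP/setP => t.
by rewrite !inE andbC; case: eqP => // /refined ->; rewrite eqxx.
Qed.

Lemma sum_split_block_ge f g i j : g j = g i -> f j != f i ->
  2 * (#|block g i| - 1) <= \sum_(u in block g i) #|block g u :\: block f u|.
Proof.
move=> gji fji; set Q := block g i.
have QE u : u \in Q -> block g u = Q by rewrite inE => /eqP/block_eq.
have sum_in : \sum_(u in Q :&: block f i) #|block g u :\: block f u| =
              #|Q :&: block f i| * #|Q :\: block f i|.
  rewrite -sum_nat_const; apply: eq_bigr => u /setIP[uQ].
  by rewrite inE => /eqP/block_eq ->; rewrite QE.
have sum_out : #|Q :\: block f i| * #|Q :&: block f i| <=
               \sum_(u in Q :\: block f i) #|block g u :\: block f u|.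
  rewrite -sum_nat_const; apply: leq_sum => u /setDP[uQ].
  rewrite QE // !inE => fui; apply/subset_leq_card/subsetP => t.
  by rewrite !inE => /andP[tQ /eqP ->]; rewrite tQ andbT eq_sym.
have in_gt0 : 0 < #|Q :&: block f i|.
  by apply/card_gt0P; exists i; rewrite /Q !inE !eqxx.
have out_gt0 : 0 < #|Q :\: block f i|.
  by apply/card_gt0P; exists j; rewrite /Q !inE gji eqxx fji.
rewrite (big_setID (block f i)) /= sum_in.
have := cardsID (block f i) Q; nia.
Qed.

Lemma nsplit_move f g v : f v != g v -> (forall t, t != v -> f t = g t) ->
  nsplit f g = (#|block f v| - 1) * 2.
Proof.
move=> fgv fg.
have at_v : block f v :\: block g v = block f v :\ v.
  apply/setP => t; rewrite !inE; case: (eqVneq t v) => [-> | tv] /=; first by rewrite eqxx.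
  by rewrite -(fg t tv); case: (eqVneq (f t) (f v)) => [->|]; rewrite ?fgv ?eqxx ?andbF.
have near_v t : t != v -> block f t :\: block g t \subset [set v].
  move=> tv; apply/subsetP => u; rewrite !inE -(fg t tv).
  by case: (eqVneq u v) => // uv; rewrite -(fg u uv); case: eqP.
have := sum_card_cross [set v] (split_sym f g).
rewrite big_set1 /= at_v setDDl setUid => cross.
rewrite /nsplit (bigD1 v) //= at_v [in RHS](cardsD1 v) mem_block add1n subSS subn0 muln2 -addnn.
congr (_ + _); rewrite cross; apply: eq_big => [t | t tv]; first by rewrite !inE.
by rewrite (setIidPl (near_v t tv)).
Qed.

Section LargeBlocks.
Variables (m : nat) (f g : T -> L).
Hypothesis f_large : forall s, m <= #|block f s|.
Hypothesis g_large : forall s, m <= #|block g s|.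

Lemma nsplit_ge_cut (A : {set T}) : m <= #|A| ->
  (forall s, s \in A -> m <= #|block f s :\: block g s :\: A|) -> 2 * m ^ 2 <= nsplit f g.
Proof.
move=> A_large out_large.
apply: leq_trans (card_cut A (split_sym f g)); rewrite leq_mul2l /= expnS expn1.
apply: leq_trans (leq_mul A_large (leqnn m)) _; rewrite -sum_nat_const.
exact: leq_sum.
Qed.

Lemma nsplit_ge_refined s t : (forall u v, g u = g v -> f u = f v) ->
  f s = f t -> g s != g t -> 2 * m ^ 2 <= nsplit f g.
Proof.
move=> refined fst gst; apply: (nsplit_ge_cut (g_large s)) => u.
rewrite inE => /eqP gus; apply: leq_trans (g_large t) (subset_leq_card _).
apply/subsetP => v; rewrite !inE => /eqP gvt.
by rewrite gvt gus (refined _ _ gvt) (refined _ _ gus) fst eqxx eq_sym gst.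
Qed.

Lemma outside_split_block_large i j s : nsplit g f < 2 * m -> g j = g i -> f j != f i ->
  #|block g i| = m -> s \in block g i -> m <= #|block f s :\: block g i|.
Proof.
move=> small gji fji cardQ sQ.
have m_gt1 : 1 < m.
  rewrite -cardQ; apply/card_gt1P; exists i, j; rewrite !inE gji eqxx.
  by split=> //; apply: contraNneq fji => ->.
have [u uQ fus] : exists2 u, u \in block g i & f u != f s.
  case: (eqVneq (f i) (f s)) => [fis|]; last by exists i; rewrite ?mem_block.
  by exists j; rewrite ?inE ?gji // -fis.
have meet_small : #|block f s :&: block g i| < m.
  rewrite -cardQ; apply/proper_card/properP; split; first exact: subsetIr.
  by exists u; rewrite // !inE (negbTE fus).
have /card_gt0P[t] : 0 < #|block f s :\: block g i|.
  by have := cardsID (block g i) (block f s); have := f_large s; lia.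
rewrite !inE => /andP[gti /eqP fts].
have disj : [disjoint block g i & block g t].
  rewrite -setI_eq0; apply/eqP/setP => v; rewrite !inE.
  by apply/negbTE/andP => -[/eqP -> /eqP git]; rewrite git eqxx in gti.
case: (boolP [exists v in block g t, f v != f t]) => [/exists_inP[v] | unsplit].
  rewrite inE => /eqP gvt fvt.
  have := sum_split_block_ge gji fji; have := sum_split_block_ge gvt fvt.
  have := leq_sum_disjoint (fun u => #|block g u :\: block f u|) disj.
  by have := g_large t; rewrite /nsplit in small; lia.
apply: leq_trans (g_large t) (subset_leq_card _); apply/subsetP => v vt.
rewrite inE (disjointFl disj vt) inE -fts.
by apply: contraNT unsplit => fvt; apply/exists_inP; exists v.
Qed.

Lemma nsplit_ge_split i j : nsplit g f < 2 * m -> g j = g i -> f j != f i ->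
  2 * m ^ 2 <= nsplit f g.
Proof.
move=> small gji fji.
have cardQ : #|block g i| = m.
  have := sum_split_block_ge gji fji.
  have : \sum_(u in block g i) #|block g u :\: block f u| <= nsplit g f.
    by rewrite [X in _ <= X](bigID (mem (block g i))) leq_addr.
  by have := g_large i; lia.
apply: (nsplit_ge_cut (A := block g i)) => [|s sQ]; first by rewrite cardQ.
move: (sQ); rewrite inE => /eqP/block_eq ->; rewrite setDDl setUid.
exact: outside_split_block_large small gji fji cardQ sQ.
Qed.

Lemma nsplit_lower s t : (f s == f t) != (g s == g t) -> nsplit g f < 2 * m ->
  2 * m ^ 2 <= nsplit f g.
Proof.
move=> differ small.
case: (boolP [exists i, exists j, (g j == g i) && (f j != f i)]).
  by case/existsP=> i /existsP[j /andP[/eqP gji fji]]; apply: nsplit_ge_split small gji fji.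
move=> unsplit; have refined u v : g u = g v -> f u = f v.
  move=> guv; apply/eqP; apply: contraNT unsplit => fuv.
  by apply/existsP; exists v; apply/existsP; exists u; rewrite guv eqxx.
case: (eqVneq (g s) (g t)) => [gst | gst].
  by rewrite (refined _ _ gst) gst !eqxx in differ.
have fst : f s = f t by apply/eqP; move: differ; rewrite (negbTE gst); case: (f s == f t).
exact: nsplit_ge_refined refined fst gst.
Qed.

End LargeBlocks.
End Blocks.

Definition word_of n (L : eqType) (f : 'I_n -> L) : word n :=
  [ffun k => f (val k).1 == f (val k).2].

Lemma card_pos_double n (r : rel 'I_n) : symmetric r -> irreflexive r ->
  #|[set k : pos n | r (val k).1 (val k).2]| * 2 = \sum_i #|[set j | r i j]|.
Proof.
move=> r_sym r_irr.
have halfE : #|[set k : pos n | r (val k).1 (val k).2]| =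
             \sum_(p | r p.1 p.2 && (p.1 < p.2)) 1.
  rewrite -sum1dep_card [RHS](reindex_omap (val : pos n -> _) insub) /=; last first.
    by move=> p /andP[_ lt]; rewrite insubT.
  by apply: eq_bigl => k; rewrite valK eqxx (valP k) !andbT.
have swap_inj : injective (fun p : 'I_n * 'I_n => (p.2, p.1)) by move=> [? ?] [? ?] [-> ->].
under eq_bigr do rewrite -sum1dep_card.
rewrite pair_big_dep /= (bigID (fun p : 'I_n * 'I_n => p.1 < p.2)) /= halfE.
rewrite muln2 -addnn; congr (_ + _).
rewrite (reindex_inj swap_inj) /=; apply: eq_bigl => -[i j] /=.
by rewrite r_sym; case: ltngtP => // ij; rewrite (ord_inj ij) r_irr.
Qed.

Lemma dab_swap n (x y : word n) : dab y x true false = dab x y false true.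
Proof. by apply: eq_card => k; rewrite !inE andbC. Qed.

Lemma neq_of_dab n (x y : word n) : 0 < dab y x false true -> x != y.
Proof.
apply: contraTneq => ->; rewrite -leqNgt leqn0.
by apply/eqP/eq_card0 => k; rewrite inE; case: (y k).
Qed.

Lemma dab_word_of n (L : eqType) (f g : 'I_n -> L) :
  dab (word_of g) (word_of f) false true * 2 = nsplit f g.
Proof.
rewrite /dab; have -> : [set k | (word_of g k == false) && (word_of f k == true)] =
          [set k : pos n | (val k).2 \in block f (val k).1 :\: block g (val k).1].
  by apply/setP => k; rewrite !inE !ffunE eqbF_neg eqb_id [f _ == _]eq_sym [g _ == _]eq_sym andbC.
rewrite (@card_pos_double _ (fun s t => t \in block f s :\: block g s)) => [|s t|s].
- by apply: eq_bigr => s _; apply: eq_card => t; rewrite inE.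
- exact: split_sym.
- by rewrite !inE eqxx.
Qed.

Lemma word_of_neq n (L : eqType) (f g : 'I_n -> L) : word_of f != word_of g ->
  exists s t, (f s == f t) != (g s == g t).
Proof.
move=> neq; have /existsP[k] : [exists k, word_of f k != word_of g k].
  apply: contraNT neq; rewrite negb_exists => /forallP same.
  by apply/eqP/ffunP => k; apply/eqP/negPn/same.
by rewrite !ffunE => differ; exists (val k).1, (val k).2.
Qed.

Lemma community_code_word_of n m (L : eqType) (f : 'I_n -> L) :
  (forall s, m <= #|block f s|) -> community_code n m (word_of f).
Proof.
move=> f_large; set P := preim_partition f [set: 'I_n].
have partP : partition P [set: 'I_n] := preim_partitionP f _.
have classE s : [set t in [set: 'I_n] | f s == f t] = block f s.
  by apply/setP => t; rewrite !inE eq_sym.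
have pblockE s : pblock P s = block f s.
  apply: def_pblock; first by case/and3P: partP.
    by rewrite -classE; apply/imsetP; exists s.
  exact: mem_block.
exists P; split=> // [_ /imsetP[s _ ->] | k]; first by rewrite classE.
by rewrite ffunE !pblockE eq_block.
Qed.

Lemma community_code_labelling n m x : community_code n m x ->
  exists2 f : 'I_n -> {set 'I_n}, x = word_of f & forall s, m <= #|block f s|.
Proof.
case=> P [partP P_large xE]; have [/eqP coverP trivP _] := and3P partP.
have coverE s : s \in cover P by rewrite coverP inE.
have blockE s : block (pblock P) s = pblock P s.
  by apply/setP => t; rewrite inE eq_sym eq_pblock.
exists (pblock P); first by apply/ffunP => k; rewrite xE ffunE.
by move=> s; rewrite blockE; apply/P_large/pblock_mem.
Qed.

Lemma dab_lower n m x y : community_code n m x -> community_code n m y -> x != y ->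
  dab y x true false < m -> m ^ 2 <= dab y x false true.
Proof.
move=> /community_code_labelling[f -> f_large] /community_code_labelling[g -> g_large] neq small.
have [s [t differ]] := word_of_neq neq.
have := nsplit_lower f_large g_large differ.
rewrite -[nsplit f g]dab_word_of -[nsplit g f]dab_word_of -(dab_swap (word_of f)); lia.
Qed.

Lemma card_range n a b : b <= n -> #|[set t : 'I_n | a <= t < b]| = b - a.
Proof.
move=> bn; rewrite -sum1dep_card -(big_mkord (fun t => a <= t < b) (fun _ => 1)).
rewrite -(big_nat_widen _ _ _ (fun t => a <= t)) // -(big_nat_widenl _ _ _ xpredT) //.
by rewrite sum_nat_const_nat muln1.
Qed.

Definition step n (c1 c2 : nat) (s : 'I_n) : nat := (c1 <= s) + (c2 <= s).

Lemma step_large n m c1 c2 (s : 'I_n) : m <= c1 -> c1 = c2 \/ c1 + m <= c2 ->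
  c2 + m <= n -> m <= #|block (step c1 c2) s|.
Proof.
move=> c1_large c12 c2_small.
have range_large a b : b <= n -> m <= b - a ->
    (forall t : 'I_n, a <= t < b -> step c1 c2 t = step c1 c2 s) ->
  m <= #|block (step c1 c2) s|.
  move=> bn; rewrite -(card_range a bn) => range_m same; apply: leq_trans range_m _.
  by apply/subset_leq_card/subsetP => t; rewrite !inE => /same ->.
rewrite /step in range_large *.
case: (ltnP s c1) => s_c1; first by apply: (range_large 0 c1) => [||t]; lia.
case: (ltnP s c2) => s_c2; first by apply: (range_large c1 c2) => [||t]; lia.
by apply: (range_large c2 n) => [||t]; lia.
Qed.

(* x has the blocks [0, 2m) and [2m, n); y splits the first one into halves. *)
Lemma split_witness n m : 3 * m + 1 <= n ->
  let x := word_of (@step n (2 * m) (2 * m)) in let y := word_of (@step n m (2 * m)) in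
  [/\ community_code n m x, community_code n m y,
      dab y x true false = 0 & dab y x false true = m ^ 2].
Proof.
move=> n_large x y; rewrite {}/x {}/y.
have diffE (s : 'I_n) :
    #|block (step (2 * m) (2 * m)) s :\: block (step m (2 * m)) s| = if s < 2 * m then m else 0.
  case: ifP => s_2m; last first.
    apply/eqP; rewrite cards_eq0; apply/eqP/setP => t; rewrite !inE /step; lia.
  case: (ltnP s m) => s_m.
    rewrite (@eq_card _ _ [set t : 'I_n | m <= t < 2 * m]) ?card_range; try lia.
    by move=> t; rewrite !inE /step; lia.
  rewrite (@eq_card _ _ [set t : 'I_n | 0 <= t < m]) ?card_range; try lia.
  by move=> t; rewrite !inE /step; lia.
split.
- by apply: community_code_word_of => s; apply: step_large; lia.
- by apply: community_code_word_of => s; apply: step_large; lia.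
- apply/eqP; rewrite -(eqn_pmul2r (isT : 0 < 2)) mul0n dab_swap dab_word_of.
  apply/eqP/nsplit_refined.
  by move=> s t; rewrite /step; lia.
- apply/eqP; rewrite -(eqn_pmul2r (isT : 0 < 2)) dab_word_of /nsplit.
  rewrite (eq_bigr _ (fun s _ => diffE s)) -big_mkcond sum_nat_cond_const.
  by rewrite (card_range 0) ?expnS ?expn1; lia.
Qed.

(* x has the blocks [0, m], (m, 2m] and (2m, n); y moves the vertex m into the
   second block. *)
Lemma move_witness n m : 3 * m + 1 <= n ->
  let x := word_of (@step n m.+1 (2 * m).+1) in let y := word_of (@step n m (2 * m).+1) in
  [/\ community_code n m x, community_code n m y,
      dab y x true false = m & dab y x false true = m].
Proof.
move=> n_large x y; rewrite {}/x {}/y.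
have m_lt_n : m < n by lia.
set v := Ordinal m_lt_n.
have moved : step m.+1 (2 * m).+1 v != step m (2 * m).+1 v by rewrite /step /=; lia.
have fixed t : t != v -> step m.+1 (2 * m).+1 t = step m (2 * m).+1 t.
  move=> tv; have : nat_of_ord t != m.
    by apply: contraNneq tv => tm; apply/eqP/val_inj; exact: tm.
  by rewrite /step; lia.
split.
- by apply: community_code_word_of => s; apply: step_large; lia.
- by apply: community_code_word_of => s; apply: step_large; lia.
- apply/eqP; rewrite -(eqn_pmul2r (isT : 0 < 2)) dab_swap dab_word_of.
  rewrite (nsplit_move _ (fun t tv => esym (fixed t tv))) 1?eq_sym // eqn_pmul2r //.
  rewrite (@eq_card _ _ [set t : 'I_n | m <= t < (2 * m).+1]) ?card_range; try lia.
  by move=> t; rewrite !inE /step /=; lia.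
- apply/eqP; rewrite -(eqn_pmul2r (isT : 0 < 2)) dab_word_of (nsplit_move moved fixed).
  rewrite eqn_pmul2r // (@eq_card _ _ [set t : 'I_n | 0 <= t < m.+1]) ?card_range; try lia.
  by move=> t; rewrite !inE /step /=; lia.
Qed.

Import Order.TTheory GRing.Theory Num.Theory.
Local Open Scope ring_scope.

Lemma gamma_ge1 (R : realType) (p q : R) : 0 < p -> p <= q -> p + q < 1 -> 1 <= gamma p q.
Proof.
move=> p_gt0 pq pq_lt1.
have q_gt0 : 0 < q by apply: lt_le_trans pq.
have p1_gt0 : 0 < 1 - p by lra.
have q1_gt0 : 0 < 1 - q by lra.
have a_gt0 : 0 < p / (1 - q) by apply: divr_gt0.
have b_gt0 : 0 < q / (1 - p) by apply: divr_gt0.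
have b_lt1 : q / (1 - p) < 1 by rewrite ltr_pdivrMr // mul1r; lra.
have ab : p / (1 - q) <= q / (1 - p).
  rewrite ler_pdivrMr // mulrAC ler_pdivlMr //.
  have : 0 <= (q - p) * (1 - p - q) by apply: mulr_ge0; lra.
  nra.
have ln_b_lt0 : ln (q / (1 - p)) < 0 by apply: ln_lt0; rewrite b_gt0 b_lt1.
have : ln (p / (1 - q)) <= ln (q / (1 - p)) by rewrite ler_ln ?posrE.
by rewrite /gamma ler_ndivlMr //; lra.
Qed.

Lemma min_le_discrepancy (R : realDomainType) (c : R) (m a b : nat) : 1 <= c ->
  (a < m -> m ^ 2 <= b)%N -> (b < m -> m ^ 2 <= a)%N ->
  Num.min ((m ^ 2)%N%:R : R) ((1 + c) * m%:R) <= c * a%:R + b%:R.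
Proof.
move=> c_ge1 a_small b_small; rewrite ge_min.
have a_ge0 : 0 <= a%:R :> R := ler0n _ _.
have b_ge0 : 0 <= b%:R :> R := ler0n _ _.
case: (ltnP a m) => [/a_small mb | am].
  apply/orP; left; have : (m ^ 2)%N%:R <= b%:R :> R by rewrite ler_nat.
  nra.
case: (ltnP b m) => [/b_small ma | bm].
  apply/orP; left; have : (m ^ 2)%N%:R <= a%:R :> R by rewrite ler_nat.
  nra.
apply/orP; right.
have : m%:R <= a%:R :> R by rewrite ler_nat.
have : m%:R <= b%:R :> R by rewrite ler_nat.
nra.
Qed.

Theorem corollary2 (R : realType) (n m : nat) (p q : R) :
  (1 <= m)%N -> (3 * m + 1 <= n)%N ->
  0 < p -> p <= q -> 0 < p + q -> p + q < 1 ->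
  is_min_discrepancy p q (community_code n m)
    (Num.min ((m ^ 2)%N%:R : R) ((1 + gamma p q) * (m%:R : R))).
Proof.
move=> m_gt0 n_large p_gt0 pq _ pq_lt1.
split; last first.
  move=> x y cx cy xy; apply: min_le_discrepancy (gamma_ge1 p_gt0 pq pq_lt1) _ _.
    exact: dab_lower cx cy xy.
  rewrite dab_swap -[dab y x false true]dab_swap.
  by apply: dab_lower cy cx _; rewrite eq_sym.
rewrite minEle; case: ifP => _.
  have [cx cy d10 d01] := split_witness n_large.
  exists (word_of (step (2 * m) (2 * m))), (word_of (step m (2 * m))); split=> //.
    by apply: neq_of_dab; rewrite d01 expn_gt0 m_gt0.
  by rewrite /discrepancy d10 d01 mulr0 add0r.
have [cx cy d10 d01] := move_witness n_large.
exists (word_of (step m.+1 (2 * m).+1)), (word_of (step m (2 * m).+1)); split=> //.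
  by apply: neq_of_dab; rewrite d01.
by rewrite /discrepancy d10 d01 mulrDl mul1r addrC.
Qed.
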